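(* Let $G$ be a finite non-abelian exponent-critical group whose order is divisible by three distinct primes. Then $G$ has a non-trivial central cyclic Sylow subgroup, and all Sylow subgroups of $G$ are abelian.
   Context: A finite group $G$ is exponent-critical if $\exp(G)$ is not the least common multiple of the exponents of the proper non-abelian subgroups of $G$. *)

From mathcomp Require Import all_boot all_fingroup all_solvable.
Set Implicit Arguments. Unset Strict Implicit. Unset Printing Implicit Defensive.
Local Open Scope group_scope.

Definition lcm_exp_proper_nonabelian (gT : finGroupType) (G : {group gT}) : nat :=
  \big[lcmn/1%N]_(H : {group gT} | (H \proper G) && ~~ abelian H) exponent H.

Definition exponent_critical (gT : finGroupType) (G : {group gT}) : bool :=
  exponent G != lcm_exp_proper_nonabelian G.

From mathcomp Require Import all_boot all_fingroup all_solvable.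
Set Implicit Arguments. Unset Strict Implicit. Unset Printing Implicit Defensive.
Local Open Scope group_scope.

(* Pick a prime p at which exp(G) exceeds the lcm of the exponents of the
   proper non-abelian subgroups, and x in a Sylow p-subgroup P of order
   exp(G)_p = exp(P).  Every proper subgroup containing x is abelian, and as
   G has at least three prime divisors every {p,q}-subgroup is proper.  So P
   is abelian, and so is P<y> for any q-element y normalising P; hence
   N_G(P) = C_G(P), and Burnside's transfer argument gives a normal
   p-complement K.  Coprime action yields, for each q <> p, a P-invariant
   Sylow q-subgroup Q, and QP abelian shows that Q is abelian and centralises
   P; thus P is central.  Finally K is non-abelian, so K<x> = G, forcing
   P = <x> to be cyclic. *)

Lemma abelian_Sylow_conj_fixed (gT : finGroupType) (G P : {group gT}) p :
  p.-Sylow(G) P -> abelian P -> 'N_G(P) \subset 'C(P) ->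
  forall a g, a \in P -> g \in G -> a ^ g \in P -> a ^ g = a.
Proof.
move=> sylP abP nPcP a g Pa Gg Pag.
have sPG := pHall_sub sylP.
have sPCag : P \subset 'C_G[a ^ g] by rewrite subsetI sPG sub_cent1 (subsetP abP).
have sPgCag : P :^ g \subset 'C_G[a ^ g].
  rewrite subsetI -{1}(conjGid Gg) conjSg sPG /= cent1J conjSg.
  by rewrite sub_cent1 (subsetP abP).
have sylPC : p.-Sylow('C_G[a ^ g]) P := pHall_subl sPCag (subsetIl _ _) sylP.
have sylPgC : p.-Sylow('C_G[a ^ g]) (P :^ g)%G.
  by apply: pHall_subl sPgCag (subsetIl _ _) _; rewrite pHallJ.
have [c /setIP[Gc /cent1P cac] defPg] := Sylow_trans sylPC sylPgC.
have NPgc : g * c^-1 \in 'N_G(P).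
  by rewrite inE groupM ?groupV //=; apply/normP; rewrite conjsgM /= defPg conjsgK.
have agc : a ^ (g * c^-1) = a.
  by rewrite conjgE -(centP (subsetP nPcP _ NPgc) a Pa) mulKg.
have agac : a ^ g = a ^ c by rewrite -{1}(mulgKV c g) conjgM agc.
apply: (@conjg_inj _ c); rewrite -agac.
by rewrite conjgE -cac mulKg.
Qed.

Section NormalComplement.
Import FiniteModule.

Variables (gT : finGroupType) (G P : {group gT}) (p : nat).
Hypotheses (sylP : p.-Sylow(G) P) (abP : abelian P) (nPcP : 'N_G(P) \subset 'C(P)).

Let abA : abelian (idm P @* P). Proof. by rewrite morphim_idm. Qed.

(* By [abelian_Sylow_conj_fixed] every term of the cycle expansion of the
   transfer is g ^+ n with the n summing to the index. *)
Lemma transfer_abelian_Sylow g :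
  g \in P -> transfer G abA g = (fmod abA g *+ #|G : P|)%R.
Proof.
move=> Pg; have sPG := pHall_sub sylP; have Gg := subsetP sPG g Pg.
have trX := transversalP (rcosets_cycle_partition sPG Gg).
rewrite (transfer_cycle_expansion sPG abA Gg trX).
rewrite -(sum_index_rcosets_cycle sPG Gg trX) -Algebra.sumrMnr.
apply: eq_bigr => y Xy; have Gy := subsetP (transversal_sub trX) y Xy.
set n := #|<[g]> : P :* y|.
have Pgn : g ^+ n \in P by rewrite groupX.
have Pgny : (g ^+ n) ^ y^-1 \in P.
  have := mulg_exp_card_rcosets P g y; rewrite -/n mem_rcoset.
  by rewrite conjgE invgK mulgA.
rewrite (abelian_Sylow_conj_fixed sylP abP nPcP Pgn) ?groupV //.
by rewrite /restrm /= (fmodX abA n (_ : g \in idm P @* P)) // morphim_idm.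
Qed.

Lemma transfer_ker_TI : 'ker (transfer_morphism G abA) :&: P = 1.
Proof.
apply/trivgP/subsetP => g /setIP[Kg Pg]; rewrite inE.
have := mker Kg; rewrite /= transfer_abelian_Sylow // => gi0.
have Ag : g \in idm P @* P by rewrite morphim_idm.
have gi1 : g ^+ #|G : P| = 1.
  by rewrite -(fmodK abA (groupX _ Ag)) fmodX // gi0.
have coPi : coprime #|P| #|G : P|.
  by case/and3P: sylP => _ pP p'i; apply: pnat_coprime pP p'i.
have : (#[g] %| gcdn #|P| #|G : P|)%N.
  by rewrite dvdn_gcd order_dvdG //= order_dvdn gi1 eqxx.
by rewrite (eqP coPi) dvdn1 order_eq1.
Qed.

Theorem Burnside_normal_complement :
  exists K : {group gT}, K <| G /\ #|K| = #|G : P|.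
Proof.
have sPG := pHall_sub sylP.
set V := transfer_morphism G abA.
exists ('ker V)%G; split; first exact: ker_normal.
have imV : #|G : 'ker V| <= #|P|.
  have := card_morphim V G; rewrite setIid => <-.
  apply: leq_trans (max_card _) _; rewrite -(card_imset _ val_inj).
  apply: (@leq_trans #|idm P @* P|); last by rewrite morphim_idm.
  by apply: subset_leq_card; apply/subsetP => _ /imsetP[u _ ->]; apply: fmodP.
have kerP : #|'ker V| * #|P| <= #|G|.
  rewrite -TI_cardMg ?transfer_ker_TI // subset_leq_card // mul_subG //.
  exact: normal_sub (ker_normal V).
apply/eqP; rewrite -(eqn_pmul2r (cardG_gt0 P)) [(#|G : P| * _)%N]mulnC Lagrange //.
rewrite eqn_leq kerP /= -{1}(Lagrange (normal_sub (ker_normal V))).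
by rewrite leq_mul2l imV orbT.
Qed.

End NormalComplement.

Lemma pred2_group_proper (gT : finGroupType) (G H : {group gT}) p q :
  2 < size (primes #|G|) -> H \subset G -> (pred2 p q).-group H -> H \proper G.
Proof.
move=> primesG sHG pqH; rewrite properE sHG /=; apply/negP => sGH.
have /andP[_ /allP pqG] := pgroupS sGH pqH.
have : size (primes #|G|) <= size [:: p; q].
  by apply: uniq_leq_size (primes_uniq _) _ => r /pqG; rewrite !inE.
by rewrite leqNgt (leq_trans _ primesG).
Qed.

Lemma constt_mem (gT : finGroupType) (H : {group gT}) y :
  (forall q : nat, y.`_q \in H) -> y \in H.
Proof. by move=> Hy; rewrite -(prod_constt y) group_prod. Qed.

Lemma Sylows_subG (gT : finGroupType) (G H : {group gT}) :
  (forall q, exists2 Q : {group gT}, q.-Sylow(G) Q & Q \subset H) -> G \subset H.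
Proof.
move=> sylH; apply/setIidPl/eqP; rewrite eqEcard subsetIl /=.
apply: dvdn_leq (cardG_gt0 _) _; apply/(dvdn_partP _ (cardG_gt0 G)) => q _.
have [Q sylQ sQH] := sylH q.
by rewrite -(card_Hall sylQ) cardSg // subsetI (pHall_sub sylQ).
Qed.

Lemma dvdn_exponent_lcm_proper_nonabelian (gT : finGroupType) (G H : {group gT}) :
  H \proper G -> ~~ abelian H -> (exponent H %| lcm_exp_proper_nonabelian G)%N.
Proof.
move=> prHG nabH; rewrite /lcm_exp_proper_nonabelian (bigD1 H) ?prHG //=.
exact: dvdn_lcml.
Qed.

Lemma lcm_proper_nonabelian_dvdn_exponent (gT : finGroupType) (G : {group gT}) :
  (lcm_exp_proper_nonabelian G %| exponent G)%N.
Proof.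
apply: (big_ind (fun n => n %| exponent G)%N) => [||H /andP[prHG _]].
- exact: dvd1n.
- by move=> m n dm dn; rewrite dvdn_lcm dm dn.
- exact/exponentS/proper_sub.
Qed.

Lemma exponent_critical_witness (gT : finGroupType) (G : {group gT}) :
  exponent_critical G ->
  exists p (P : {group gT}) x, [/\ p.-Sylow(G) P, x \in P, x != 1
    & forall H : {group gT}, x \in H -> H \proper G -> abelian H].
Proof.
rewrite /exponent_critical => crit.
set L := lcm_exp_proper_nonabelian G in crit.
have [p _ ndvdL] : exists2 p, p \in primes (exponent G) & ~~ ((exponent G)`_p %| L)%N.
  apply/hasP; apply: contraR crit => /hasPn dvdL.
  rewrite eqn_dvd lcm_proper_nonabelian_dvdn_exponent andbT.
  by apply/(dvdn_partP _ (exponent_gt0 G)) => r /dvdL; rewrite negbK.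
have [P sylP] := Sylow_exists p G.
have [x Px oxP] := exponent_witness (pgroup_nil (pHall_pgroup sylP)).
have ox : #[x] = ((exponent G)`_p)%N by rewrite -oxP (exponent_Hall sylP).
exists p, P, x; split=> // [|H Hx prHG].
  by apply: contra ndvdL => /eqP x1; rewrite -ox x1 order1 dvd1n.
apply: contraR ndvdL => nabH; rewrite -ox (dvdn_trans (dvdn_exponent Hx)) //.
exact: dvdn_exponent_lcm_proper_nonabelian.
Qed.

Section CriticalSylow.

Variables (gT : finGroupType) (G P : {group gT}) (p : nat) (x : gT).
Hypotheses (sylP : p.-Sylow(G) P) (Px : x \in P).
Hypothesis critx : forall H : {group gT}, x \in H -> H \proper G -> abelian H.
Hypothesis primesG : 2 < size (primes #|G|).

Let sPG : P \subset G. Proof. exact: pHall_sub sylP. Qed.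
Let pP : p.-group P. Proof. exact: pHall_pgroup sylP. Qed.

Let pred2_Sylow q : (pred2 p q).-group P.
Proof. by apply: pi_pnat pP _; rewrite !inE eqxx. Qed.

Lemma critical_pred2_abelian q (H : {group gT}) :
  H \subset G -> x \in H -> (pred2 p q).-group H -> abelian H.
Proof. by move=> sHG Hx pqH; apply: critx Hx (pred2_group_proper primesG sHG pqH). Qed.

Lemma critical_Sylow_abelian : abelian P.
Proof. exact: critical_pred2_abelian sPG Px (pred2_Sylow p). Qed.

Lemma critical_Sylow_norm_sub_cent : 'N_G(P) \subset 'C(P).
Proof.
apply/subsetP => y /setIP[Gy nPy]; apply: constt_mem => q.
have sYy : <[y.`_q]> \subset <[y]> by rewrite cycle_subG cycle_constt.
have nPYq : <[y.`_q]> \subset 'N(P) by rewrite (subset_trans sYy) ?cycle_subG.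
have sPYqG : P <*> <[y.`_q]> \subset G.
  by rewrite join_subG sPG (subset_trans sYy) ?cycle_subG.
have PYq_yq : y.`_q \in P <*> <[y.`_q]>.
  by rewrite (subsetP (joing_subr _ _)) ?cycle_id.
have qYq : q.-group <[y.`_q]> := p_elt_constt q y.
have [eqp | nqp] := eqVneq q p.
  subst q; have pPYp : p.-group (P <*> <[y.`_p]>).
    by rewrite norm_joinEr // pgroupM pP.
  move: PYq_yq; rewrite (sub_pHall sylP pPYp (joing_subl _ _) sPYqG).
  exact: (subsetP critical_Sylow_abelian).
have pqPYq : (pred2 p q).-group (P <*> <[y.`_q]>).
  rewrite norm_joinEr // pgroupM pred2_Sylow /=.
  by apply: pi_pnat qYq _; rewrite !inE eqxx orbT.
have abPYq := critical_pred2_abelian sPYqG (subsetP (joing_subl _ _) x Px) pqPYq.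
exact: subsetP (centS (joing_subl _ _)) _ (subsetP abPYq _ PYq_yq).
Qed.

Variable K : {group gT}.
Hypotheses (nsKG : K <| G) (oK : #|K| = #|G : P|).

Let sKG : K \subset G. Proof. exact: normal_sub nsKG. Qed.

Let coKP : coprime #|K| #|P|.
Proof. by rewrite oK coprime_sym (pnat_coprime pP); case/and3P: sylP. Qed.

Let oKP : (#|K| * #|P|)%N = #|G|.
Proof. by rewrite oK mulnC Lagrange. Qed.

Lemma critical_Sylow_cent q : q != p ->
  exists2 Q : {group gT}, q.-Sylow(G) Q & abelian Q && (Q \subset 'C(P)).
Proof.
move=> nqp; have nKP : P \subset 'N(K) := subset_trans sPG (normal_norm nsKG).
have [Q sylQK nQP] := sol_coprime_Sylow_exists q (pgroup_sol pP) nKP coKP.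
have sQK := pHall_sub sylQK; have sQG := subset_trans sQK sKG.
have oGK : #|G : K| = #|P|.
  by apply/eqP; rewrite -(eqn_pmul2l (cardG_gt0 K)) Lagrange // oKP.
have sylQ : q.-Sylow(G) Q.
  rewrite /pHall sQG (pHall_pgroup sylQK) -(Lagrange_index sKG sQK) pnatM.
  rewrite oGK (pi_pnat pP) ?inE 1?eq_sym //.
  by case/and3P: sylQK.
have sQPG : Q <*> P \subset G by rewrite join_subG sQG sPG.
have pqQP : (pred2 p q).-group (Q <*> P).
  rewrite norm_joinEr // pgroupM pred2_Sylow andbT.
  by apply: pi_pnat (pHall_pgroup sylQ) _; rewrite !inE eqxx orbT.
have := critical_pred2_abelian sQPG (subsetP (joing_subr _ _) x Px) pqQP.
rewrite /= norm_joinEr // abelianM => /and3P[abQ _ cQP].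
by exists Q; rewrite // abQ centsC.
Qed.

Lemma critical_Sylow_central : P \subset 'Z(G).
Proof.
rewrite subsetI sPG centsC; apply: Sylows_subG => q.
have [-> | nqp] := eqVneq q p; first by exists P => //; apply: critical_Sylow_abelian.
by have [Q sylQ /andP[_ cQP]] := critical_Sylow_cent nqp; exists Q.
Qed.

Lemma critical_Sylows_abelian r (R : {group gT}) : r.-Sylow(G) R -> abelian R.
Proof.
case: (eqVneq r p) => [-> | nrp] sylR.
  have [g _ ->] := Sylow_trans sylP sylR.
  by rewrite abelianJ critical_Sylow_abelian.
have [Q sylQ /andP[abQ _]] := critical_Sylow_cent nrp.
by have [g _ ->] := Sylow_trans sylQ sylR; rewrite abelianJ.
Qed.

Lemma critical_complement_nonabelian : ~~ abelian G -> ~~ abelian K.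
Proof.
apply: contra => abK; have cGP : G \subset 'C(P).
  by rewrite centsC; have /subsetIP[] := critical_Sylow_central.
have defG : K * P = G.
  by apply/eqP; rewrite eqEcard mul_subG //= TI_cardMg ?coprime_TIg ?oKP.
by rewrite -defG abelianM abK critical_Sylow_abelian centsC (subset_trans sKG).
Qed.

Lemma critical_Sylow_cycle : ~~ abelian G -> P :=: <[x]>.
Proof.
move/critical_complement_nonabelian => nabK.
have sKxG : K <*> <[x]> \subset G.
  by rewrite join_subG sKG cycle_subG (subsetP sPG).
have nKx : <[x]> \subset 'N(K).
  by rewrite cycle_subG (subsetP (normal_norm nsKG)) ?(subsetP sPG).
have not_prKx : ~~ (K <*> <[x]> \proper G).
  apply: contra nabK => /(critx (subsetP (joing_subr _ _) x (cycle_id x))).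
  exact/abelianS/joing_subl.
have leGKx : #|G| <= #|K| * #[x].
  move: not_prKx; rewrite properEcard sKxG -leqNgt norm_joinEr // => /leq_trans.
  by apply; rewrite mul_cardG leq_pmulr.
apply/eqP; rewrite eq_sym eqEcard cycle_subG Px /=.
by rewrite -(leq_pmul2l (cardG_gt0 K)) oKP.
Qed.

End CriticalSylow.

Theorem mainTheorem6 (gT : finGroupType) (G : {group gT}) :
  ~~ abelian G -> exponent_critical G -> (3 <= size (primes #|G|))%N ->
  (exists (p : nat) (P : {group gT}),
      [/\ p.-Sylow(G) P, P :!=: 1, P \subset 'Z(G) & cyclic P])
  /\ (forall (p : nat) (P : {group gT}), p.-Sylow(G) P -> abelian P).
Proof.
move=> nabG crit primesG.
have [p [P [x [sylP Px ntx critx]]]] := exponent_critical_witness crit.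
have [K [nsKG oK]] := Burnside_normal_complement sylP
  (critical_Sylow_abelian sylP Px critx primesG)
  (critical_Sylow_norm_sub_cent sylP Px critx primesG).
split=> [|r R]; last exact: (critical_Sylows_abelian sylP Px critx primesG nsKG oK).
have defP := critical_Sylow_cycle sylP Px critx primesG nsKG oK nabG.
exists p, P; split.
- exact: sylP.
- by rewrite defP cycle_eq1.
- exact: (critical_Sylow_central sylP Px critx primesG nsKG oK).
- by rewrite defP cycle_cyclic.
Qed.
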